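(* Let $f\in\mathbb{N}^\mathbb{N}$ and let $h\in2^\mathbb{N}$ be of hyperimmune-free degree with $h\in P$ for some very small $\Pi^f_1$ class $P\subseteq2^\mathbb{N}$. Then every $h'\in2^\mathbb{N}$ with $h'\le_T h$ is of hyperimmune-free degree and belongs to some very small $\Pi^f_1$ class.
   Context: A tree is a subset of $2^{<\mathbb{N}}$ closed under initial segments; a $\Pi^f_1$ class is a set $P=[T]\subseteq2^\mathbb{N}$ of infinite paths through some $f$-computable tree $T$. A node $\sigma\in T$ is extendible if it has infinitely many extensions in $T$, and a branching node if $\sigma0$ and $\sigma1$ are both extendible; $\mathrm{Br}(P)=\mathrm{Br}(T)$ is the set of branching nodes (it depends only on $P$). $P$ is very small if the principal function of the set $\{|\sigma|:\sigma\in\mathrm{Br}(P)\}$ (the function $n\mapsto$ its $n$-th element in increasing order) dominates every computable function (i.e. is eventually $\ge$ it). $X$ is of hyperimmune-free degree if every function $g\le_T X$ is dominated by a computable function. *)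

From Stdlib Require Import Arith List.
Import ListNotations.

Definition cpair (x y : nat) : nat := (x + y) * (x + y + 1) / 2 + y.

Inductive code : Type :=
| CZero | CSucc | CId | COracle | CFst | CSnd
| CComp (c d : code)
| CPair (c d : code)
| CRec (c d : code)
| CMu (c : code).

Inductive eval (o : nat -> nat) : code -> nat -> nat -> Prop :=
| ev_zero x : eval o CZero x 0
| ev_succ x : eval o CSucc x (S x)
| ev_id x : eval o CId x x
| ev_oracle x : eval o COracle x (o x)
| ev_fst a b : eval o CFst (cpair a b) a
| ev_snd a b : eval o CSnd (cpair a b) b
| ev_comp c d x y z : eval o d x y -> eval o c y z -> eval o (CComp c d) x z
| ev_pair c d x a b : eval o c x a -> eval o d x b -> eval o (CPair c d) x (cpair a b)
| ev_rec0 c d x y : eval o c x y -> eval o (CRec c d) (cpair x 0) y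
| ev_recS c d x n y z : eval o (CRec c d) (cpair x n) y ->
    eval o d (cpair x (cpair n y)) z -> eval o (CRec c d) (cpair x (S n)) z
| ev_mu c x n : eval o c (cpair x n) 0 ->
    (forall m, m < n -> exists k, eval o c (cpair x m) (S k)) -> eval o (CMu c) x n.

Definition computable_in (o : nat -> nat) (F : nat -> nat) : Prop :=
  exists c, forall x, eval o c x (F x).

Definition computable (F : nat -> nat) : Prop := computable_in (fun _ => 0) F.

Definition chi (X : nat -> bool) : nat -> nat := fun n => if X n then 1 else 0.

Definition fun_le_T (g : nat -> nat) (X : nat -> bool) : Prop := computable_in (chi X) g.
Definition Turing_le (Y X : nat -> bool) : Prop := fun_le_T (chi Y) X.

Definition dominates (p g : nat -> nat) : Prop := exists N, forall n, N <= n -> g n <= p n.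

Definition hyperimmune_free (X : nat -> bool) : Prop :=
  forall g, fun_le_T g X -> exists q, computable q /\ dominates q g.

Definition string := list bool.

(** Bijective coding of strings by naturals. *)
Fixpoint scode (s : string) : nat :=
  match s with
  | [] => 0
  | false :: t => 2 * scode t + 1
  | true :: t => 2 * scode t + 2
  end.

Definition prefix (s t : string) : Prop := exists u, t = s ++ u.

Definition is_tree (T : string -> Prop) : Prop :=
  forall s t, prefix s t -> T t -> T s.

Definition tree_computable_in (f : nat -> nat) (T : string -> Prop) : Prop :=
  exists F, computable_in f F /\ forall s, (T s <-> F (scode s) = 1).

Definition init (X : nat -> bool) (n : nat) : string := map X (seq 0 n).

Definition path (T : string -> Prop) (X : nat -> bool) : Prop := forall n, T (init X n).

Definition Pi01_class (f : nat -> nat) (P : (nat -> bool) -> Prop) : Prop :=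
  exists T, is_tree T /\ tree_computable_in f T /\ forall X, P X <-> path T X.

(** sigma has infinitely many extensions in T *)
Definition extendible (T : string -> Prop) (s : string) : Prop :=
  T s /\ forall l : list string, exists t, T t /\ prefix s t /\ ~ In t l.

Definition branching (T : string -> Prop) (s : string) : Prop :=
  extendible T (s ++ [false]) /\ extendible T (s ++ [true]).

Definition principal_function (A : nat -> Prop) (p : nat -> nat) : Prop :=
  (forall n, p n < p (S n)) /\ (forall m, A m <-> exists n, p n = m).

(** Very small class (Br(P) = Br(T) for any tree T with [T] = P). *)
Definition very_small (P : (nat -> bool) -> Prop) : Prop :=
  exists T p, is_tree T /\ (forall X, P X <-> path T X) /\
    principal_function (fun m => exists s, branching T s /\ length s = m) p /\
    forall g, computable g -> dominates p g.

From Stdlib Require Import Arith List Lia Cantor Classical ClassicalEpsilon Wf_nat.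
Import ListNotations.

(* Hyperimmune-freeness passes down along Turing reductions trivially. For the class, fix a
   program computing [h'] from [h]. Its step bound at [h] is [h]-computable, hence below a
   computable strictly increasing [qq], which also bounds the use. Let [Q] be [P] together with
   all [Y] computed within [qq] steps from some [X] in [P]. A string [t] is on the tree of [Q]
   iff it is on the tree of [P] or is computed from a string of that tree of length
   [qq (length t)]: a bounded search, so [Q] is a [Pi^f_1] class; [P] is kept in [Q] only so
   that [Q] has infinitely many branching levels. If the [n]-th branching level of [Q] lay below
   [m = g n] for a computable [g], [Q] would have at least [n + 2] segments of length [m]. But
   such a segment is determined by one bit and the values of a member of [P] at its first [j]
   branching levels, as soon as the [j]-th one is above [m + qq m]; since the branching levels
   of [P] grow faster than any computable function, [j] can be taken about [log n], and then
   [2 ^ (j + 1) < n + 2]. *)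

Definition cfst n := fst (Cantor.of_nat n).
Definition csnd n := snd (Cantor.of_nat n).

Lemma cpair_to_nat x y : cpair x y = Cantor.to_nat (x, y).
Proof.
  unfold cpair. rewrite Cantor.to_nat_spec2.
  replace (x + y + 1) with (S (y + x)) by lia. replace (x + y) with (y + x) by lia. lia.
Qed.

Lemma cfst_cpair a b : cfst (cpair a b) = a.
Proof. rewrite cpair_to_nat; unfold cfst; rewrite Cantor.cancel_of_to; reflexivity. Qed.

Lemma csnd_cpair a b : csnd (cpair a b) = b.
Proof. rewrite cpair_to_nat; unfold csnd; rewrite Cantor.cancel_of_to; reflexivity. Qed.

Lemma cpair_cfst_csnd n : cpair (cfst n) (csnd n) = n.
Proof.
  rewrite cpair_to_nat; unfold cfst, csnd.
  destruct (Cantor.of_nat n) eqn:E; cbn [fst snd].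
  rewrite <- E; apply Cantor.cancel_to_of.
Qed.

Lemma eval_cfst o x : eval o CFst x (cfst x).
Proof. rewrite <- (cpair_cfst_csnd x) at 1. constructor. Qed.

Lemma eval_csnd o x : eval o CSnd x (csnd x).
Proof. rewrite <- (cpair_cfst_csnd x) at 1. constructor. Qed.

Section Closure.
Variable o : nat -> nat.

Lemma computable_in_ext F G : (forall x, F x = G x) -> computable_in o F -> computable_in o G.
Proof. intros E [c Hc]. exists c. intro x. rewrite <- E. apply Hc. Qed.

Lemma computable_in_id : computable_in o (fun x => x).
Proof. exists CId. intro; constructor. Qed.

Lemma computable_in_succ : computable_in o S.
Proof. exists CSucc. intro; constructor. Qed.

Lemma computable_in_oracle : computable_in o o.
Proof. exists COracle. intro; constructor. Qed.

Lemma computable_in_cfst : computable_in o cfst.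
Proof. exists CFst. intro; apply eval_cfst. Qed.

Lemma computable_in_csnd : computable_in o csnd.
Proof. exists CSnd. intro; apply eval_csnd. Qed.

Lemma computable_in_comp F G :
  computable_in o F -> computable_in o G -> computable_in o (fun x => F (G x)).
Proof. intros [c Hc] [d Hd]. exists (CComp c d). intro x. econstructor; eauto. Qed.

Lemma computable_in_cpair F G :
  computable_in o F -> computable_in o G -> computable_in o (fun x => cpair (F x) (G x)).
Proof. intros [c Hc] [d Hd]. exists (CPair c d). intro x. econstructor; eauto. Qed.

Lemma computable_in_const k : computable_in o (fun _ => k).
Proof.
  induction k.
  - exists CZero. intro; constructor.
  - exact (computable_in_comp _ _ computable_in_succ IHk).
Qed.

Definition computable2_in (F : nat -> nat -> nat) :=
  computable_in o (fun z => F (cfst z) (csnd z)).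
Definition computable3_in (F : nat -> nat -> nat -> nat) :=
  computable_in o (fun z => F (cfst z) (cfst (csnd z)) (csnd (csnd z))).

Lemma computable_in_comp2 F A B : computable2_in F ->
  computable_in o A -> computable_in o B -> computable_in o (fun x => F (A x) (B x)).
Proof.
  intros HF HA HB.
  apply (computable_in_ext (fun x => (fun z => F (cfst z) (csnd z)) (cpair (A x) (B x)))).
  - intro; rewrite cfst_cpair, csnd_cpair; reflexivity.
  - apply (computable_in_comp (fun z => F (cfst z) (csnd z)) (fun x => cpair (A x) (B x)));
      [exact HF | apply computable_in_cpair; assumption].
Qed.

Lemma computable_in_comp3 F A B D : computable3_in F ->
  computable_in o A -> computable_in o B -> computable_in o D ->
  computable_in o (fun x => F (A x) (B x) (D x)).
Proof.
  intros HF HA HB HD.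
  apply (computable_in_ext (fun x => (fun z => F (cfst z) (cfst (csnd z)) (csnd (csnd z)))
                                      (cpair (A x) (cpair (B x) (D x))))).
  - intro; rewrite !cfst_cpair, !csnd_cpair, cfst_cpair; reflexivity.
  - apply (computable_in_comp (fun z => F (cfst z) (cfst (csnd z)) (csnd (csnd z)))
                                (fun x => cpair (A x) (cpair (B x) (D x)))); [exact HF|].
    apply computable_in_cpair; [assumption | apply computable_in_cpair; assumption].
Qed.

Definition primrec (G : nat -> nat) (H : nat -> nat -> nat -> nat) (x n : nat) : nat :=
  nat_rec (fun _ => nat) (G x) (fun n r => H x n r) n.

Lemma computable2_in_primrec G H :
  computable_in o G -> computable3_in H -> computable2_in (primrec G H).
Proof.
  intros [c Hc] [d Hd]. exists (CRec c d). intro z. rewrite <- (cpair_cfst_csnd z) at 1.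
  generalize (cfst z) (csnd z). intros x n. induction n; simpl.
  - constructor. apply Hc.
  - eapply ev_recS; [apply IHn|].
    specialize (Hd (cpair x (cpair n (primrec G H x n)))).
    rewrite !cfst_cpair, !csnd_cpair, cfst_cpair in Hd. exact Hd.
Qed.

Lemma computable_in_mu F G : computable2_in F ->
  (forall x, F x (G x) = 0 /\ forall m, m < G x -> F x m <> 0) -> computable_in o G.
Proof.
  intros [c Hc] HG. exists (CMu c). intro x. destruct (HG x) as [H1 H2]. constructor.
  - specialize (Hc (cpair x (G x))). rewrite cfst_cpair, csnd_cpair, H1 in Hc. exact Hc.
  - intros m Hm. specialize (Hc (cpair x m)). rewrite cfst_cpair, csnd_cpair in Hc.
    specialize (H2 m Hm). destruct (F x m); [congruence | eauto].
Qed.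

End Closure.

Fixpoint subst_oracle (d : code) (c : code) : code :=
  match c with
  | COracle => d
  | CComp c1 c2 => CComp (subst_oracle d c1) (subst_oracle d c2)
  | CPair c1 c2 => CPair (subst_oracle d c1) (subst_oracle d c2)
  | CRec c1 c2 => CRec (subst_oracle d c1) (subst_oracle d c2)
  | CMu c1 => CMu (subst_oracle d c1)
  | c => c
  end.

Lemma eval_subst_oracle o1 o2 d : (forall x, eval o2 d x (o1 x)) ->
  forall c x y, eval o1 c x y -> eval o2 (subst_oracle d c) x y.
Proof.
  intros Hd. fix IH 4. intros c x y H. destruct H; simpl; try (constructor; fail).
  - apply Hd.
  - econstructor; [apply (IH _ _ _ H) | apply (IH _ _ _ H0)].
  - econstructor; [apply (IH _ _ _ H) | apply (IH _ _ _ H0)].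
  - econstructor; apply (IH _ _ _ H).
  - eapply ev_recS; [apply (IH _ _ _ H) | apply (IH _ _ _ H0)].
  - constructor; [apply IH; exact H|].
    intros m Hm. destruct (H0 m Hm) as [k Hk]. exists k. apply IH. exact Hk.
Qed.

Lemma computable_in_trans o1 o2 F :
  computable_in o2 o1 -> computable_in o1 F -> computable_in o2 F.
Proof.
  intros [d Hd] [c Hc]. exists (subst_oracle d c). intro.
  apply eval_subst_oracle with o1; auto.
Qed.

Lemma computable_in_of_computable o F : computable F -> computable_in o F.
Proof. intro H. apply (computable_in_trans (fun _ => 0)); [apply computable_in_const | exact H]. Qed.

Class Computable1 (o : nat -> nat) (F : nat -> nat) := computable1 : computable_in o F.
Class Computable2 (o : nat -> nat) (F : nat -> nat -> nat) := computable2 : computable2_in o F.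
Class Computable3 (o : nat -> nat) (F : nat -> nat -> nat -> nat) :=
  computable3 : computable3_in o F.

#[export] Instance Computable1_succ o : Computable1 o S := computable_in_succ o.
#[export] Instance Computable1_cfst o : Computable1 o cfst := computable_in_cfst o.
#[export] Instance Computable1_csnd o : Computable1 o csnd := computable_in_csnd o.
#[export] Instance Computable1_oracle o : Computable1 o o := computable_in_oracle o.

Ltac prove_computable := repeat match goal with
 | |- computable_in _ (fun x => x) => apply computable_in_id
 | |- computable_in _ (fun _ => _) => apply computable_in_const
 | |- computable_in ?o (fun x => ?F (@?A x) (@?B x) (@?D x)) =>
     apply (computable_in_comp3 o F A B D); [exact (@computable3 o F _) | | |]
 | |- computable_in ?o (fun x => ?F (@?A x) (@?B x)) =>
     apply (computable_in_comp2 o F A B); [exact (@computable2 o F _) | |]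
 | |- computable_in ?o (fun x => ?F (@?A x)) =>
     apply (computable_in_comp o F A); [exact (@computable1 o F _) |]
 | |- computable_in ?o ?F => exact (@computable1 o F _)
 | |- computable2_in _ _ => unfold computable2_in
 | |- computable3_in _ _ => unfold computable3_in
 end.

Ltac computable_primrec := apply computable2_in_primrec; prove_computable.

#[export] Instance Computable2_cpair o : Computable2 o cpair.
Proof.
  apply (computable_in_ext o (fun z => z)); [|apply computable_in_id].
  intro; symmetry; apply cpair_cfst_csnd.
Qed.

#[export] Instance Computable2_add o : Computable2 o Nat.add.
Proof.
  apply (computable_in_ext o (fun z => primrec (fun x => x) (fun _ _ r => S r) (cfst z) (csnd z))).
  - intro z. induction (csnd z); simpl; lia.
  - change (computable2_in o (primrec (fun x => x) (fun _ _ r => S r))). computable_primrec.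
Qed.

#[export] Instance Computable2_mul o : Computable2 o Nat.mul.
Proof.
  apply (computable_in_ext o (fun z => primrec (fun _ => 0) (fun x _ r => r + x) (cfst z) (csnd z))).
  - intro z. induction (csnd z); simpl; lia.
  - change (computable2_in o (primrec (fun _ => 0) (fun x _ r => r + x))). computable_primrec.
Qed.

#[export] Instance Computable1_pred o : Computable1 o pred.
Proof.
  assert (Computable2 o (primrec (fun _ => 0) (fun _ n _ => n))) by computable_primrec.
  apply (computable_in_ext o (fun n => primrec (fun _ => 0) (fun _ n _ => n) 0 n)).
  - intros []; reflexivity.
  - prove_computable.
Qed.

#[export] Instance Computable2_sub o : Computable2 o Nat.sub.
Proof.
  apply (computable_in_ext o (fun z => primrec (fun x => x) (fun _ _ r => pred r) (cfst z) (csnd z))).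
  - intro z. induction (csnd z); simpl; lia.
  - change (computable2_in o (primrec (fun x => x) (fun _ _ r => pred r))). computable_primrec.
Qed.

Definition ifz (a b c : nat) := match a with 0 => b | _ => c end.

#[export] Instance Computable3_ifz o : Computable3 o ifz.
Proof.
  assert (Computable2 o (primrec cfst (fun w _ _ => csnd w))) by computable_primrec.
  apply (computable_in_ext o (fun z => primrec cfst (fun w _ _ => csnd w)
                                       (cpair (cfst (csnd z)) (csnd (csnd z))) (cfst z))).
  - intro z. destruct (cfst z); simpl; rewrite ?cfst_cpair, ?csnd_cpair; reflexivity.
  - prove_computable.
Qed.

Definition lt_indicator a b := ifz (b - a) 0 1.
Definition eq_indicator a b := ifz (a - b + (b - a)) 1 0.

Lemma lt_indicator_spec a b : lt_indicator a b = if a <? b then 1 else 0.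
Proof.
  unfold lt_indicator, ifz. destruct (b - a) eqn:E; destruct (a <? b) eqn:F; auto;
  apply Nat.ltb_lt in F || apply Nat.ltb_ge in F; lia.
Qed.

Lemma eq_indicator_spec a b : eq_indicator a b = if a =? b then 1 else 0.
Proof.
  unfold eq_indicator, ifz. destruct (a - b + (b - a)) eqn:E; destruct (a =? b) eqn:F; auto;
  apply Nat.eqb_eq in F || apply Nat.eqb_neq in F; lia.
Qed.

Lemma eq_indicator_neq0 a b : eq_indicator a b <> 0 <-> a = b.
Proof. rewrite eq_indicator_spec. destruct (Nat.eqb_spec a b); split; congruence. Qed.

#[export] Instance Computable2_lt_indicator o : Computable2 o lt_indicator.
Proof. unfold Computable2, lt_indicator. prove_computable. Qed.

#[export] Instance Computable2_eq_indicator o : Computable2 o eq_indicator.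
Proof. unfold Computable2, eq_indicator. prove_computable. Qed.

#[export] Instance Computable2_max o : Computable2 o Nat.max.
Proof.
  apply (computable_in_ext o (fun z => cfst z + (csnd z - cfst z))); [intro; lia|].
  prove_computable.
Qed.

Definition bsum (F : nat -> nat -> nat) := primrec (fun _ => 0) (fun x n r => r + F x n).
Definition bprod (F : nat -> nat -> nat) := primrec (fun _ => 1) (fun x n r => r * F x n).
Definition bmax (F : nat -> nat -> nat) := primrec (fun _ => 0) (fun x n r => Nat.max r (F x n)).

Section BoundedOperators.
Variables (o : nat -> nat) (F : nat -> nat -> nat).
Context `{Computable2 o F}.

#[export] Instance Computable2_bsum : Computable2 o (bsum F).
Proof. computable_primrec. Qed.
#[export] Instance Computable2_bprod : Computable2 o (bprod F).
Proof. computable_primrec. Qed.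
#[export] Instance Computable2_bmax : Computable2 o (bmax F).
Proof. computable_primrec. Qed.
End BoundedOperators.

(** * A step-bounded interpreter *)

Fixpoint rec_iter (b : option nat) (step : nat -> nat -> option nat) (n : nat) : option nat :=
  match n with
  | 0 => b
  | S n => match rec_iter b step n with Some y => step n y | None => None end
  end.

(* [Some None]: no zero found yet; [Some (Some n)]: [n] is the least zero; [None]: diverged. *)
Fixpoint mu_search (g : nat -> option nat) (n : nat) : option (option nat) :=
  match n with
  | 0 => Some None
  | S n => match mu_search g n with
           | Some None =>
               match g n with Some 0 => Some (Some n) | Some (S _) => Some None | None => None end
           | r => r
           end
  end.

(* [run k o c x]: the oracle may only be queried below [k], and [k] also bounds every search;
   [o] is a partial oracle. *)
Fixpoint run (k : nat) (o : nat -> option nat) (c : code) (x : nat) : option nat :=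
  match c with
  | CZero => Some 0
  | CSucc => Some (S x)
  | CId => Some x
  | COracle => if x <? k then o x else None
  | CFst => Some (cfst x)
  | CSnd => Some (csnd x)
  | CComp c1 c2 => match run k o c2 x with Some y => run k o c1 y | None => None end
  | CPair c1 c2 =>
      match run k o c1 x, run k o c2 x with Some a, Some b => Some (cpair a b) | _, _ => None end
  | CRec c1 c2 =>
      rec_iter (run k o c1 (cfst x)) (fun n y => run k o c2 (cpair (cfst x) (cpair n y))) (csnd x)
  | CMu c1 =>
      match mu_search (fun i => run k o c1 (cpair x i)) k with Some (Some n) => Some n | _ => None end
  end.

Lemma mu_search_none g k :
  mu_search g k = Some None <-> forall m, m < k -> exists v, g m = Some (S v).
Proof.
  induction k; simpl; [split; intros; [lia | reflexivity]|].
  destruct (mu_search g k) as [[r|]|] eqn:E.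
  - split; [congruence|]. intro H.
    assert (Some (Some r) = Some None) by (apply IHk; intros; apply H; lia). congruence.
  - destruct (g k) as [[|v]|] eqn:G.
    + split; [congruence|]. intro H. destruct (H k ltac:(lia)). congruence.
    + split; [|reflexivity]. intros _ m Hm.
      destruct (Nat.eq_dec m k); [subst; eauto | apply IHk; auto; lia].
    + split; [congruence|]. intro H. destruct (H k ltac:(lia)). congruence.
  - split; [congruence|]. intro H.
    assert (None = Some (@None nat)) by (apply IHk; intros; apply H; lia). congruence.
Qed.

Lemma mu_search_some g k n : mu_search g k = Some (Some n) <->
  n < k /\ g n = Some 0 /\ forall m, m < n -> exists v, g m = Some (S v).
Proof.
  revert n. induction k; intro n; simpl; [split; [congruence | lia]|].
  destruct (mu_search g k) as [[r|]|] eqn:E.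
  - destruct (proj1 (IHk r) eq_refl) as (Hr & Hgr & Hbelow). split.
    + intro H. inversion H; subst. intuition lia.
    + intros (Hn & Hgn & Hbelow'). f_equal.
      destruct (lt_eq_lt_dec r n) as [[L|L]|L]; auto.
      * destruct (Hbelow' r L). congruence.
      * destruct (Hbelow n L). congruence.
  - assert (Hbelow := proj1 (mu_search_none g k) E).
    destruct (g k) as [[|v]|] eqn:G; split; try congruence.
    + intro H; inversion H; subst. auto.
    + intros (Hn & Hgn & _). destruct (Nat.eq_dec n k); [subst; reflexivity|].
      destruct (Hbelow n ltac:(lia)); congruence.
    + intros (Hn & Hgn & _). destruct (Nat.eq_dec n k); [congruence|].
      destruct (Hbelow n ltac:(lia)); congruence.
    + intros (Hn & Hgn & _). destruct (Nat.eq_dec n k); [congruence|].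
      destruct (Hbelow n ltac:(lia)); congruence.
  - split; [congruence|]. intros (Hn & Hgn & Hbelow). destruct (Nat.eq_dec n k).
    + subst. assert (mu_search g k = Some None) by (apply mu_search_none; auto). congruence.
    + assert (@None (option nat) = Some (Some n)) by (apply IHk; intuition lia). congruence.
Qed.

Definition oracle_extends (o o' : nat -> option nat) := forall i v, o i = Some v -> o' i = Some v.

Lemma run_mono c : forall k k' o o' x y,
  run k o c x = Some y -> k <= k' -> oracle_extends o o' -> run k' o' c x = Some y.
Proof.
  induction c; intros k k' o o' x y H Hk Ho; simpl in *; auto.
  - destruct (Nat.ltb_spec x k); [|congruence].
    destruct (Nat.ltb_spec x k'); [auto | lia].
  - destruct (run k o c2 x) eqn:E; [|congruence]. erewrite IHc2; eauto.
  - destruct (run k o c1 x) eqn:E1; [|congruence]. destruct (run k o c2 x) eqn:E2; [|congruence].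
    erewrite IHc1, IHc2; eauto.
  - revert y H. generalize (csnd x). induction n; simpl; intros y H; [eauto|].
    destruct (rec_iter _ _ n) eqn:E; [|congruence]. rewrite (IHn _ eq_refl). eauto.
  - destruct (mu_search _ k) as [[r|]|] eqn:E; try congruence. inversion H; subst.
    apply mu_search_some in E. destruct E as (E1 & E2 & E3).
    replace (mu_search (fun i => run k' o' c (cpair x i)) k') with (Some (Some y)); [reflexivity|].
    symmetry; apply mu_search_some. split; [lia|]. split; [eauto|].
    intros m Hm. destruct (E3 m Hm) as [v Hv]. eauto.
Qed.

Lemma run_use c : forall k o o' x, (forall i, i < k -> o i = o' i) -> run k o c x = run k o' c x.
Proof.
  induction c; intros k o o' x Ho; simpl; auto.
  - destruct (Nat.ltb_spec x k); auto.
  - rewrite (IHc2 _ _ _ _ Ho). destruct (run k o' c2 x); auto.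
  - rewrite (IHc1 _ _ _ _ Ho), (IHc2 _ _ _ _ Ho). reflexivity.
  - generalize (csnd x). induction n; simpl; [apply IHc1; exact Ho|]. rewrite IHn.
    destruct (rec_iter (run k o' c1 (cfst x)) (fun n y => run k o' c2 (cpair (cfst x) (cpair n y))) n);
      [apply IHc2; exact Ho | reflexivity].
  - replace (mu_search (fun i => run k o c (cpair x i)) k)
      with (mu_search (fun i => run k o' c (cpair x i)) k); [reflexivity|].
    generalize k at 2 4. induction k0; simpl; [reflexivity|].
    rewrite IHk0, (IHc _ _ _ _ Ho). reflexivity.
Qed.

Definition total_oracle (O : nat -> nat) : nat -> option nat := fun i => Some (O i).

Lemma oracle_extends_refl o : oracle_extends o o.
Proof. intros i v; auto. Qed.

Lemma run_total_mono O c k k' x y :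
  run k (total_oracle O) c x = Some y -> k <= k' -> run k' (total_oracle O) c x = Some y.
Proof. intros H Hk. exact (run_mono c k k' _ _ x y H Hk (oracle_extends_refl _)). Qed.

Lemma bound_finitely_many (P : nat -> nat -> Prop) n :
  (forall m k k', P m k -> k <= k' -> P m k') ->
  (forall m, m < n -> exists k, P m k) -> exists K, forall m, m < n -> P m K.
Proof.
  intros Mo. induction n; intro H; [exists 0; intros; lia|].
  destruct IHn as [K HK]; [intros; apply H; lia|]. destruct (H n ltac:(lia)) as [k Hk].
  exists (Nat.max K k). intros m Hm. destruct (Nat.eq_dec m n).
  - subst. eapply Mo; eauto; lia.
  - eapply Mo; [apply HK; lia | lia].
Qed.

Lemma run_complete O : forall c x y, eval O c x y -> exists k, run k (total_oracle O) c x = Some y.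
Proof.
  fix IH 4. intros c x y H. destruct H; simpl; try (exists 0; reflexivity).
  - exists (S x). destruct (Nat.ltb_spec x (S x)); [reflexivity | lia].
  - exists 0. rewrite cfst_cpair; reflexivity.
  - exists 0. rewrite csnd_cpair; reflexivity.
  - destruct (IH _ _ _ H) as [k1 H1]. destruct (IH _ _ _ H0) as [k2 H2].
    exists (Nat.max k1 k2). rewrite (run_total_mono _ _ _ _ _ _ H1 (Nat.le_max_l _ _)).
    eapply run_total_mono; eauto; lia.
  - destruct (IH _ _ _ H) as [k1 H1]. destruct (IH _ _ _ H0) as [k2 H2]. exists (Nat.max k1 k2).
    rewrite (run_total_mono _ _ _ _ _ _ H1 (Nat.le_max_l _ _)).
    rewrite (run_total_mono _ _ _ _ _ _ H2 (Nat.le_max_r _ _)). reflexivity.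
  - destruct (IH _ _ _ H) as [k1 H1]. exists k1. rewrite cfst_cpair, csnd_cpair. exact H1.
  - destruct (IH _ _ _ H) as [k1 H1]. destruct (IH _ _ _ H0) as [k2 H2].
    exists (Nat.max k1 k2). rewrite !cfst_cpair, !csnd_cpair. simpl.
    assert (E := run_total_mono _ _ _ _ _ _ H1 (Nat.le_max_l k1 k2)). simpl in E.
    rewrite cfst_cpair, csnd_cpair in E. rewrite E. eapply run_total_mono; eauto; lia.
  - destruct (IH _ _ _ H) as [k1 H1].
    assert (exists K, forall m, m < n -> exists v, run K (total_oracle O) c (cpair x m) = Some (S v))
      as [K HK].
    { apply bound_finitely_many.
      - intros m k k' [v Hv] Hk. exists v. eapply run_total_mono; eauto.
      - intros m Hm. destruct (H0 m Hm) as [v Hv]. destruct (IH _ _ _ Hv) as [k Hk]. eauto. }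
    exists (Nat.max (S n) (Nat.max k1 K)).
    replace (mu_search _ _) with (Some (Some n)); [reflexivity|]. symmetry. apply mu_search_some.
    split; [lia|]. split; [eapply run_total_mono; eauto; lia|].
    intros m Hm. destruct (HK m Hm) as [v Hv]. exists v. eapply run_total_mono; eauto; lia.
Qed.

Definition opt_code (v : option nat) : nat := match v with None => 0 | Some y => S y end.

Definition oracle_coded (ORC : nat -> nat -> option nat) (u i : nat) : nat := opt_code (ORC u i).

Definition run_coded (ORC : nat -> nat -> option nat) (c : code) (w x : nat) : nat :=
  opt_code (run (cfst w) (ORC (csnd w)) c x).

Definition run_rec_coded ORC c1 c2 :=
  primrec (fun v => run_coded ORC c1 (cfst v) (csnd v))
    (fun v n r => ifz r 0 (run_coded ORC c2 (cfst v) (cpair (csnd v) (cpair n (pred r))))).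

Lemma run_coded_rec ORC c1 c2 w x :
  run_coded ORC (CRec c1 c2) w x = run_rec_coded ORC c1 c2 (cpair w (cfst x)) (csnd x).
Proof.
  unfold run_coded. simpl. generalize (csnd x) as n.
  induction n; unfold run_rec_coded in *; simpl; rewrite ?cfst_cpair, ?csnd_cpair; [reflexivity|].
  rewrite <- IHn. destruct (rec_iter _ _ n); simpl; rewrite ?cfst_cpair, ?csnd_cpair; reflexivity.
Qed.

Definition mu_code (v : option (option nat)) : nat :=
  match v with None => 0 | Some None => 1 | Some (Some n) => S (S n) end.

Definition run_mu_coded ORC c :=
  primrec (fun _ => 1) (fun v n r =>
    ifz r 0 (ifz (pred r)
      (ifz (run_coded ORC c (cfst v) (cpair (csnd v) n)) 0
         (ifz (pred (run_coded ORC c (cfst v) (cpair (csnd v) n))) (S (S n)) 1)) r)).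

Lemma mu_code_mu_search ORC c w x n :
  mu_code (mu_search (fun i => run (cfst w) (ORC (csnd w)) c (cpair x i)) n)
  = run_mu_coded ORC c (cpair w x) n.
Proof.
  induction n; unfold run_mu_coded in *; simpl; [reflexivity|]. rewrite <- IHn.
  destruct (mu_search _ n) as [[r|]|]; simpl; [reflexivity| |reflexivity].
  rewrite ?cfst_cpair, ?csnd_cpair. unfold run_coded.
  destruct (run _ _ c _) as [[|v]|]; reflexivity.
Qed.

Lemma run_coded_mu ORC c w x :
  run_coded ORC (CMu c) w x =
  ifz (pred (run_mu_coded ORC c (cpair w x) (cfst w))) 0 (pred (run_mu_coded ORC c (cpair w x) (cfst w))).
Proof.
  rewrite <- mu_code_mu_search. unfold run_coded. simpl.
  destruct (mu_search _ _) as [[r|]|]; reflexivity.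
Qed.

Lemma computable_run_coded o ORC : Computable2 o (oracle_coded ORC) ->
  forall c, Computable2 o (run_coded ORC c).
Proof.
  intros HO. induction c; unfold Computable2, computable2_in.
  - apply (computable_in_ext o (fun _ => 1)); [reflexivity | prove_computable].
  - apply (computable_in_ext o (fun z => S (S (csnd z)))); [reflexivity | prove_computable].
  - apply (computable_in_ext o (fun z => S (csnd z))); [reflexivity | prove_computable].
  - apply (computable_in_ext o (fun z => ifz (lt_indicator (csnd z) (cfst (cfst z))) 0
                                           (oracle_coded ORC (csnd (cfst z)) (csnd z)))).
    + intro z. unfold run_coded; simpl. rewrite lt_indicator_spec. destruct (_ <? _); reflexivity.
    + prove_computable.
  - apply (computable_in_ext o (fun z => S (cfst (csnd z)))); [reflexivity | prove_computable].
  - apply (computable_in_ext o (fun z => S (csnd (csnd z)))); [reflexivity | prove_computable].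
  - apply (computable_in_ext o (fun z => ifz (run_coded ORC c2 (cfst z) (csnd z)) 0
                               (run_coded ORC c1 (cfst z) (pred (run_coded ORC c2 (cfst z) (csnd z)))))).
    + intro z. unfold run_coded; simpl. destruct (run _ _ c2 _); reflexivity.
    + prove_computable.
  - apply (computable_in_ext o (fun z => ifz (run_coded ORC c1 (cfst z) (csnd z)) 0
                               (ifz (run_coded ORC c2 (cfst z) (csnd z)) 0
                                 (S (cpair (pred (run_coded ORC c1 (cfst z) (csnd z)))
                                           (pred (run_coded ORC c2 (cfst z) (csnd z)))))))).
    + intro z. unfold run_coded; simpl. destruct (run _ _ c1 _), (run _ _ c2 _); reflexivity.
    + prove_computable.
  - assert (Computable2 o (run_rec_coded ORC c1 c2)) by computable_primrec.
    apply (computable_in_ext o (fun z => run_rec_coded ORC c1 c2 (cpair (cfst z) (cfst (csnd z)))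
                                           (csnd (csnd z)))).
    + intro z. symmetry. apply run_coded_rec.
    + prove_computable.
  - assert (Computable2 o (run_mu_coded ORC c)) by computable_primrec.
    apply (computable_in_ext o (fun z =>
      ifz (pred (run_mu_coded ORC c (cpair (cfst z) (csnd z)) (cfst (cfst z)))) 0
          (pred (run_mu_coded ORC c (cpair (cfst z) (csnd z)) (cfst (cfst z)))))).
    + intro z. symmetry. apply run_coded_mu.
    + prove_computable.
Qed.

#[export] Instance Computable2_pow o : Computable2 o Nat.pow.
Proof.
  apply (computable_in_ext o (fun z => primrec (fun _ => 1) (fun x _ r => r * x) (cfst z) (csnd z))).
  - intro z. induction (csnd z); simpl; lia.
  - change (computable2_in o (primrec (fun _ => 1) (fun x _ r => r * x))). computable_primrec.
Qed.

Section BoundedOperatorSpecs.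
Variables (F : nat -> nat -> nat) (x : nat).

Lemma bsum_S b : bsum F x (S b) = bsum F x b + F x b.
Proof. reflexivity. Qed.

Lemma bsum_neq0 b : bsum F x b <> 0 <-> exists n, n < b /\ F x n <> 0.
Proof.
  induction b; [split; [intros H; contradiction H; reflexivity | intros (n & H & _); lia]|].
  rewrite bsum_S, Nat.eq_add_0. split.
  - intro H. destruct (Nat.eq_dec (F x b) 0) as [E|E].
    + destruct (proj1 IHb) as (n & ? & ?); [tauto|]. exists n. split; [lia | assumption].
    + exists b. split; [lia | exact E].
  - intros (n & Hn & Hf) [H1 H2]. destruct (Nat.eq_dec n b); [subst; tauto|].
    apply IHb; [|exact H1]. exists n. split; [lia | exact Hf].
Qed.

Lemma bprod_neq0 b : bprod F x b <> 0 <-> forall n, n < b -> F x n <> 0.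
Proof.
  induction b; [split; intros; [lia | discriminate]|].
  change (bprod F x (S b)) with (bprod F x b * F x b). rewrite Nat.mul_eq_0. split.
  - intros H n Hn. destruct (Nat.eq_dec n b); [subst; tauto|]. apply IHb; [tauto | lia].
  - intros H [H1|H1]; [revert H1; apply IHb; intros; apply H; lia | exact (H b ltac:(lia) H1)].
Qed.

Lemma le_bsum b n : n < b -> F x n <= bsum F x b.
Proof.
  induction b; intro H; [lia|]. rewrite bsum_S.
  destruct (Nat.eq_dec n b); [subst; lia | specialize (IHb ltac:(lia)); lia].
Qed.

Lemma le_bmax b n : n < b -> F x n <= bmax F x b.
Proof.
  induction b; intro H; [lia|]. change (bmax F x (S b)) with (Nat.max (bmax F x b) (F x b)).
  destruct (Nat.eq_dec n b); [subst; lia | specialize (IHb ltac:(lia)); lia].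
Qed.

Lemma bsum_indicator L b : (forall i, F x i = if i <? L then 1 else 0) -> L <= b -> bsum F x b = L.
Proof.
  intro HF. induction b; intro Hb; [change (bsum F x 0) with 0; lia|].
  rewrite bsum_S, HF.
  destruct (Nat.eq_dec L (S b)).
  - subst. destruct (Nat.ltb_spec b (S b)); [|lia].
    enough (Hc : forall c, c <= b -> bsum F x c = c) by (rewrite Hc; lia).
    induction c; intro; [reflexivity|].
    rewrite bsum_S, IHc, HF by lia.
    destruct (Nat.ltb_spec c (S b)); lia.
  - rewrite IHb by lia. destruct (Nat.ltb_spec b L); lia.
Qed.

End BoundedOperatorSpecs.

Definition half_parity n :=
  primrec (fun _ => cpair 0 0)
    (fun _ _ r => ifz (csnd r) (cpair (cfst r) 1) (cpair (S (cfst r)) 0)) 0 n.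
Definition half n := cfst (half_parity n).
Definition parity n := csnd (half_parity n).

Lemma half_parity_spec n : n = 2 * half n + parity n /\ parity n <= 1.
Proof.
  unfold half, parity. induction n; [unfold half_parity; simpl; rewrite ?cfst_cpair, ?csnd_cpair; lia|].
  change (half_parity (S n))
    with (ifz (csnd (half_parity n)) (cpair (cfst (half_parity n)) 1) (cpair (S (cfst (half_parity n))) 0)).
  destruct (csnd (half_parity n)); simpl; rewrite ?cfst_cpair, ?csnd_cpair; lia.
Qed.

Lemma half_parity_unique n a b : n = 2 * a + b -> b <= 1 -> half n = a /\ parity n = b.
Proof. intros. destruct (half_parity_spec n). lia. Qed.

#[export] Instance Computable1_half_parity o : Computable1 o half_parity.
Proof.
  assert (Computable2 o (primrec (fun _ => cpair 0 0)
    (fun _ _ r => ifz (csnd r) (cpair (cfst r) 1) (cpair (S (cfst r)) 0)))) by computable_primrec.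
  unfold Computable1, half_parity. prove_computable.
Qed.
#[export] Instance Computable1_half o : Computable1 o half.
Proof. unfold Computable1, half. prove_computable. Qed.
#[export] Instance Computable1_parity o : Computable1 o parity.
Proof. unfold Computable1, parity. prove_computable. Qed.

Definition b2n (b : bool) : nat := if b then 1 else 0.

Lemma b2n_inj a b : b2n a = b2n b -> a = b.
Proof. destruct a, b; simpl; congruence. Qed.

Definition scode_tail n := half (pred n).
Definition scode_head n := ifz n 0 (1 - parity n).
Definition scode_drop := primrec (fun n => n) (fun _ _ r => scode_tail r).
Definition scode_length n := bsum (fun n i => ifz (scode_drop n i) 0 1) n n.
Definition scode_bit n i := scode_head (scode_drop n i).

#[export] Instance Computable1_scode_tail o : Computable1 o scode_tail.
Proof. unfold Computable1, scode_tail. prove_computable. Qed.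
#[export] Instance Computable1_scode_head o : Computable1 o scode_head.
Proof. unfold Computable1, scode_head. prove_computable. Qed.
#[export] Instance Computable2_scode_drop o : Computable2 o scode_drop.
Proof. computable_primrec. Qed.
#[export] Instance Computable1_scode_length o : Computable1 o scode_length.
Proof.
  assert (Computable2 o (fun n i => ifz (scode_drop n i) 0 1)) by (unfold Computable2; prove_computable).
  unfold Computable1, scode_length. prove_computable.
Qed.
#[export] Instance Computable2_scode_bit o : Computable2 o scode_bit.
Proof. unfold Computable2, scode_bit. prove_computable. Qed.

Lemma scode_tail_cons b t : scode_tail (scode (b :: t)) = scode t.
Proof.
  unfold scode_tail. destruct b; cbn [scode].
  - destruct (half_parity_unique (pred (2 * scode t + 2)) (scode t) 1); lia.
  - destruct (half_parity_unique (pred (2 * scode t + 1)) (scode t) 0); lia.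
Qed.

Lemma scode_head_cons b t : scode_head (scode (b :: t)) = b2n b.
Proof.
  unfold scode_head. destruct b; cbn [scode].
  - destruct (half_parity_unique (2 * scode t + 2) (S (scode t)) 0) as [_ E]; [lia | lia|].
    rewrite E, Nat.add_comm. reflexivity.
  - destruct (half_parity_unique (2 * scode t + 1) (scode t) 1) as [_ E]; [lia | lia|].
    rewrite E, Nat.add_comm. reflexivity.
Qed.

Lemma scode_drop_scode s i : scode_drop (scode s) i = scode (skipn i s).
Proof.
  induction i; [reflexivity|]. change (scode_drop (scode s) (S i)) with (scode_tail (scode_drop (scode s) i)).
  rewrite IHi. clear IHi. revert s. induction i; intros [|b t].
  - reflexivity.
  - apply scode_tail_cons.
  - unfold scode_tail. simpl. destruct (half_parity_unique 0 0 0); auto.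
  - apply IHi.
Qed.

Lemma length_le_scode s : length s <= scode s.
Proof. induction s as [|[] t]; simpl; lia. Qed.

Lemma scode_lt_pow2 s : scode s < 2 ^ S (length s).
Proof.
  enough (scode s + 2 <= 2 ^ S (length s)) by lia.
  induction s as [|b t IH]; cbn [scode length]; [simpl; lia|].
  rewrite (Nat.pow_succ_r' 2 (S (length t))). destruct b; lia.
Qed.

Lemma scode_surj m : exists s, scode s = m.
Proof.
  induction m as [m IH] using lt_wf_ind. destruct m as [|m]; [exists []; reflexivity|].
  destruct (half_parity_spec m) as [E L]. destruct (IH (half m) ltac:(lia)) as [s Hs].
  destruct (parity m) as [|[|k]] eqn:Eo; [exists (false :: s) | exists (true :: s) | lia];
    cbn [scode]; lia.
Qed.

Lemma scode_length_scode s : scode_length (scode s) = length s.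
Proof.
  unfold scode_length. apply bsum_indicator; [|apply length_le_scode].
  intro i. rewrite scode_drop_scode. destruct (Nat.ltb_spec i (length s)).
  - destruct (skipn i s) as [|b l] eqn:E.
    + apply (f_equal (@length bool)) in E. rewrite length_skipn in E. simpl in E. lia.
    + destruct b; cbn [scode]; rewrite Nat.add_comm; reflexivity.
  - rewrite skipn_all2 by lia. reflexivity.
Qed.

Lemma scode_bit_scode s i : scode_bit (scode s) i = b2n (nth i s false).
Proof.
  unfold scode_bit. rewrite scode_drop_scode.
  revert s; induction i; intros [|b t]; simpl; [reflexivity | apply scode_head_cons | reflexivity | apply IHi].
Qed.

Definition string_oracle (s : string) : nat -> option nat :=
  fun i => if i <? length s then Some (b2n (nth i s false)) else None.
Definition scode_oracle (u i : nat) : option nat :=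
  if i <? scode_length u then Some (scode_bit u i) else None.

Lemma scode_oracle_scode s i : scode_oracle (scode s) i = string_oracle s i.
Proof. unfold scode_oracle, string_oracle. rewrite scode_length_scode, scode_bit_scode. reflexivity. Qed.

Definition agree (X Y : nat -> bool) (n : nat) : Prop := forall i, i < n -> X i = Y i.

Lemma init_length X n : length (init X n) = n.
Proof. unfold init. rewrite length_map, length_seq. reflexivity. Qed.

Lemma init_S X n : init X (S n) = init X n ++ [X n].
Proof. unfold init. rewrite seq_S, map_app. reflexivity. Qed.

Lemma nth_init X n i d : i < n -> nth i (init X n) d = X i.
Proof.
  intro H. unfold init. rewrite nth_indep with (d' := X 0) by (rewrite length_map, length_seq; lia).
  rewrite map_nth, seq_nth by lia. reflexivity.
Qed.

Lemma init_eq_agree X Y n : init X n = init Y n <-> agree X Y n.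
Proof.
  split.
  - intros H i Hi. rewrite <- (nth_init X n i false Hi), <- (nth_init Y n i false Hi), H. reflexivity.
  - intro H. apply nth_ext with (d := false) (d' := false); rewrite !init_length; [reflexivity|].
    intros i Hi. rewrite !nth_init; auto.
Qed.

Lemma firstn_init X m n : m <= n -> firstn m (init X n) = init X m.
Proof.
  intro H. apply nth_ext with (d := false) (d' := false); rewrite length_firstn, !init_length; [lia|].
  intros i Hi. rewrite nth_firstn. destruct (Nat.ltb_spec i m); [|lia]. rewrite !nth_init by lia; reflexivity.
Qed.

Lemma prefix_firstn a n : prefix (firstn n a) a.
Proof. exists (skipn n a). symmetry; apply firstn_skipn. Qed.

Lemma prefix_init X m n : m <= n -> prefix (init X m) (init X n).
Proof. intro H. rewrite <- (firstn_init X m n H). apply prefix_firstn. Qed.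

Lemma prefix_nth a b i d : prefix a b -> i < length a -> nth i a d = nth i b d.
Proof. intros [u ->] H. rewrite app_nth1; auto. Qed.

Lemma prefix_length a b : prefix a b -> length a <= length b.
Proof. intros [u ->]. rewrite length_app. lia. Qed.

Lemma firstn_app_length (s u : string) : firstn (length s) (s ++ u) = s.
Proof. rewrite firstn_app, Nat.sub_diag, firstn_all. apply app_nil_r. Qed.

Lemma length_le_sum_lengths (t : string) l : In t l -> length t <= list_sum (map (@length bool) l).
Proof. induction l as [|a l IH]; simpl; [contradiction|]. intros [<-|H]; [lia | specialize (IH H); lia]. Qed.

(* An infinite chain of lengthening strings escapes every finite list. *)
Lemma extendible_of_lengths T s (F : nat -> string) :
  T s -> (forall n, T (F n) /\ prefix s (F n) /\ n <= length (F n)) -> extendible T s.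
Proof.
  intros Ts HF. split; [exact Ts|]. intro l.
  destruct (HF (S (list_sum (map (@length bool) l)))) as (HT & Hp & Hlen).
  exists (F (S (list_sum (map (@length bool) l)))). split; [exact HT|]. split; [exact Hp|].
  intro Hin. apply length_le_sum_lengths in Hin. lia.
Qed.

Lemma extendible_init_path T X n : path T X -> extendible T (init X n).
Proof.
  intro HX. apply (extendible_of_lengths T _ (fun k => init X (n + k))); [apply HX|].
  intro k. split; [apply HX|]. split; [apply prefix_init; lia | rewrite init_length; lia].
Qed.

Lemma extendible_child T s : is_tree T -> extendible T s ->
  extendible T (s ++ [false]) \/ extendible T (s ++ [true]).
Proof.
  intros HT [Hs Hext]. apply NNPP. intros [N0 N1]%not_or_and.
  assert (Fin : forall b, ~ extendible T (s ++ [b]) ->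
                 exists l, forall t, T t -> prefix (s ++ [b]) t -> In t l).
  { intros b Nb. destruct (classic (T (s ++ [b]))) as [Tb|Tb].
    - apply NNPP. intro H. apply Nb. split; [exact Tb|]. intro l. apply NNPP. intro H2. apply H.
      exists l. intros t Tt Pt. apply NNPP. intro Ht. apply H2. exists t; auto.
    - exists []. intros t Tt Pt. exfalso. apply Tb. exact (HT _ t Pt Tt). }
  destruct (Fin _ N0) as [l0 H0]. destruct (Fin _ N1) as [l1 H1].
  destruct (Hext (s :: l0 ++ l1)) as (t & Tt & [[|b u] ->] & Hin).
  - apply Hin. left. symmetry. apply app_nil_r.
  - apply Hin. right. apply in_or_app.
    destruct b; [right; apply H1 | left; apply H0]; auto; exists u; rewrite <- app_assoc; reflexivity.
Qed.

(* König's lemma: always move to an extendible child. *)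
Lemma extendible_path T s : is_tree T -> extendible T s -> exists X, path T X /\ init X (length s) = s.
Proof.
  intros HT Hs.
  set (next := fun t : string =>
    if excluded_middle_informative (extendible T (t ++ [false])) then t ++ [false] else t ++ [true]).
  assert (Hnext : forall t, extendible T t -> extendible T (next t) /\ exists b, next t = t ++ [b]).
  { intros t Ht. unfold next. destruct (excluded_middle_informative _) as [E|E]; [eauto|].
    destruct (extendible_child T t HT Ht); [contradiction | eauto]. }
  set (sq := fun k => Nat.iter k next s).
  assert (Hsq : forall k, extendible T (sq k) /\ length (sq k) = length s + k).
  { induction k as [|k [E L]]; [split; [exact Hs | simpl; lia]|]. simpl. fold (sq k).
    destruct (Hnext _ E) as [E2 [b Hb]]. split; [exact E2 | rewrite Hb, length_app, L; simpl; lia]. }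
  assert (Hpre : forall k d, prefix (sq k) (sq (k + d))).
  { intros k d. induction d as [|d [u Hu]]; [rewrite Nat.add_0_r; exists []; symmetry; apply app_nil_r|].
    rewrite Nat.add_succ_r. simpl. fold (sq (k + d)).
    destruct (Hnext _ (proj1 (Hsq (k + d)))) as [_ [b Hb]]. rewrite Hb.
    exists (u ++ [b]). rewrite Hu, app_assoc. reflexivity. }
  assert (Hnth : forall k k' i, i < length (sq k) -> i < length (sq k') ->
                   nth i (sq k) false = nth i (sq k') false).
  { intros k k' i H1 H2. destruct (Nat.le_ge_cases k k').
    - replace k' with (k + (k' - k)) by lia. apply prefix_nth; auto.
    - replace k with (k' + (k - k')) by lia. symmetry. apply prefix_nth; auto. }
  set (X := fun i => nth i (sq (S i)) false).
  assert (HX : forall n, init X n = firstn n (sq n)).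
  { intro n. apply nth_ext with (d := false) (d' := false).
    - rewrite init_length, length_firstn, (proj2 (Hsq n)). lia.
    - intros i Hi. rewrite init_length in Hi. rewrite nth_init, nth_firstn by exact Hi.
      destruct (Nat.ltb_spec i n); [|lia]. apply Hnth; rewrite (proj2 (Hsq _)); lia. }
  exists X. split.
  - intro n. rewrite HX. apply (HT _ (sq n)); [apply prefix_firstn | apply (proj1 (Hsq n))].
  - rewrite HX. destruct (Hpre 0 (length s)) as [u Hu]. simpl in Hu. rewrite Hu. apply firstn_app_length.
Qed.

Lemma least_witness (P : nat -> Prop) : (exists n, P n) -> exists n, P n /\ forall m, P m -> n <= m.
Proof.
  intro H.
  destruct (dec_inh_nat_subset_has_unique_least_element P (fun n => classic (P n)) H) as [n [[H1 H2] _]].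
  eauto.
Qed.

(* Enumerate [A] increasingly: [p (S n)] is the least element of [A] above [p n]. *)
Lemma principal_function_exists (A : nat -> Prop) :
  (forall N, exists m, N <= m /\ A m) -> exists p, principal_function A p.
Proof.
  intro HA.
  assert (Hl : forall b, exists m, (b <= m /\ A m) /\ forall m', b <= m' /\ A m' -> m <= m')
    by (intro b; apply least_witness, HA).
  set (next := fun b => proj1_sig (constructive_indefinite_description _ (Hl b))).
  assert (Hnext : forall b, (b <= next b /\ A (next b)) /\ forall m', b <= m' /\ A m' -> next b <= m')
    by (intro b; exact (proj2_sig (constructive_indefinite_description _ (Hl b)))).
  set (p := fix p n := match n with 0 => next 0 | S n => next (S (p n)) end).
  assert (Hinc : forall n, p n < p (S n)) by (intro n; simpl; destruct (Hnext (S (p n))) as [[H1 _] _]; lia).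
  assert (Hge : forall n, n <= p n) by (induction n; [lia | specialize (Hinc n); lia]).
  exists p. split; [exact Hinc|]. intro m. split.
  - intro Am. destruct (least_witness (fun n => m <= p n)) as [n [Hn1 Hn2]]; [exists m; apply Hge|].
    exists n. destruct n as [|n].
    + destruct (Hnext 0) as [_ H]. specialize (H m ltac:(split; auto; lia)). simpl in *. lia.
    + assert (~ m <= p n) by (intro; specialize (Hn2 n H); lia).
      destruct (Hnext (S (p n))) as [_ H2]. specialize (H2 m ltac:(split; auto; lia)). simpl in *. lia.
  - intros [n <-]. destruct n; apply (Hnext _).
Qed.

Lemma first_difference X Y K : ~ agree X Y K -> exists d, d < K /\ agree X Y d /\ X d <> Y d.
Proof.
  induction K; intro H; [exfalso; apply H; intros i Hi; lia|].
  destruct (classic (agree X Y K)) as [H1|H1].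
  - exists K. split; [lia|]. split; [exact H1|]. intro E. apply H. intros i Hi.
    destruct (Nat.eq_dec i K); [subst; exact E | apply H1; lia].
  - destruct (IHK H1) as (d & ? & ? & ?). exists d. split; [lia | auto].
Qed.

Fixpoint all_strings (n : nat) : list (list bool) :=
  match n with
  | 0 => [[]]
  | S n => map (cons false) (all_strings n) ++ map (cons true) (all_strings n)
  end.

Lemma all_strings_length n : length (all_strings n) = 2 ^ n.
Proof. induction n; cbn [all_strings]; [reflexivity|]. rewrite length_app, !length_map, IHn. simpl. lia. Qed.

Lemma in_all_strings s : In s (all_strings (length s)).
Proof.
  induction s as [|[] s IH]; simpl; [auto|..]; apply in_or_app; [right | left]; apply in_map, IH.
Qed.

Lemma NoDup_strings_length_le (l : list string) n :
  NoDup l -> (forall s, In s l -> length s = n) -> length l <= 2 ^ n.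
Proof.
  intros Hl Hn. rewrite <- all_strings_length. apply NoDup_incl_length; [exact Hl|].
  intros s Hs. rewrite <- (Hn s Hs). apply in_all_strings.
Qed.

Section StrictlyIncreasing.
Variable q : nat -> nat.
Hypothesis Hq : forall n, q n < q (S n).

Lemma strict_mono_le a b : a <= b -> q a <= q b.
Proof. induction 1; [lia | specialize (Hq m); lia]. Qed.

Lemma strict_mono_lt_inv a b : q a < q b -> a < b.
Proof. intro H. destruct (Nat.lt_ge_cases a b) as [|L]; [assumption|]. apply strict_mono_le in L. lia. Qed.

Lemma strict_mono_ge_id n : n <= q n.
Proof. induction n; [lia | specialize (Hq n); lia]. Qed.
End StrictlyIncreasing.

Definition segment (Q : (nat -> bool) -> Prop) (m : nat) (s : string) : Prop :=
  exists Y, Q Y /\ init Y m = s.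
Definition pruned_tree (Q : (nat -> bool) -> Prop) (s : string) : Prop := segment Q (length s) s.

Lemma pruned_tree_is_tree Q : is_tree (pruned_tree Q).
Proof.
  intros s t [u ->] [Y [HY HYt]]. exists Y. split; [exact HY|].
  rewrite <- (firstn_init Y (length s) (length (s ++ u))) by (rewrite length_app; lia).
  rewrite HYt. apply firstn_app_length.
Qed.

Lemma path_pruned_tree Q Y : Q Y -> path (pruned_tree Q) Y.
Proof. intros HY n. exists Y. rewrite init_length. auto. Qed.

Lemma paths_pruned_tree Q T : (forall Y, Q Y <-> path T Y) -> forall Y, Q Y <-> path (pruned_tree Q) Y.
Proof.
  intros HQ Y. split; [apply path_pruned_tree|]. intro HY. apply HQ. intro n.
  destruct (HY n) as (Z & HZ & EZ). rewrite init_length in EZ. rewrite <- EZ. apply HQ, HZ.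
Qed.

Lemma branching_pruned_tree Q s : branching (pruned_tree Q) s ->
  segment Q (S (length s)) (s ++ [false]) /\ segment Q (S (length s)) (s ++ [true]).
Proof.
  intros [[S0 _] [S1 _]]. unfold pruned_tree in S0, S1. rewrite length_app, Nat.add_1_r in S0, S1.
  split; assumption.
Qed.

Lemma branching_pruned_tree_split Q X Y m : Q X -> Q Y -> agree X Y m -> X m = false -> Y m = true ->
  branching (pruned_tree Q) (init X m).
Proof.
  intros HX HY E HXm HYm. apply init_eq_agree in E. split.
  - rewrite <- HXm, <- init_S. apply extendible_init_path, path_pruned_tree, HX.
  - rewrite E, <- HYm, <- init_S. apply extendible_init_path, path_pruned_tree, HY.
Qed.

Lemma segments_step Q m l : NoDup l -> (forall t, In t l -> segment Q m t) ->
  exists l', NoDup l' /\ (forall t, In t l' -> segment Q (S m) t) /\ length l <= length l' /\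
    ((exists s, branching (pruned_tree Q) s /\ length s = m) -> S (length l) <= length l').
Proof.
  intros ND Hl.
  assert (Hch : forall t, exists Y, In t l -> Q Y /\ init Y m = t).
  { intro t. destruct (classic (In t l)) as [I|I].
    - destruct (Hl t I) as [Y HY]. eauto.
    - exists (fun _ => true). tauto. }
  set (ext := fun t => init (proj1_sig (constructive_indefinite_description _ (Hch t))) (S m)).
  assert (Hext : forall t, In t l -> segment Q (S m) (ext t) /\ firstn m (ext t) = t).
  { intros t I. unfold ext. destruct (constructive_indefinite_description _ _) as [Y HY]. simpl.
    destruct (HY I) as [HQY HYt]. split; [exists Y; auto | rewrite firstn_init; auto]. }
  assert (ND' : NoDup (map ext l)).
  { apply NoDup_map_NoDup_ForallPairs; [|exact ND]. intros x y Ix Iy E.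
    rewrite <- (proj2 (Hext x Ix)), <- (proj2 (Hext y Iy)), E. reflexivity. }
  assert (Hin' : forall t, In t (map ext l) -> segment Q (S m) t).
  { intros t It. apply in_map_iff in It. destruct It as (x & <- & Ix). apply Hext, Ix. }
  destruct (classic (exists s, branching (pruned_tree Q) s /\ length s = m)) as [Bm|Bm].
  - destruct Bm as (s & Bs & <-). destruct (branching_pruned_tree Q s Bs) as [S0 S1].
    assert (Hnew : exists z, ~ In z (map ext l) /\ segment Q (S (length s)) z).
    { assert (Hs : forall b, In (s ++ [b]) (map ext l) -> ext s = s ++ [b]).
      { intros b I. apply in_map_iff in I. destruct I as (x & Ex & Ix).
        assert (x = s) by (rewrite <- (proj2 (Hext x Ix)), Ex; apply firstn_app_length).
        subst x. exact Ex. }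
      destruct (classic (In (s ++ [false]) (map ext l))) as [I0|I0]; [|eauto].
      destruct (classic (In (s ++ [true]) (map ext l))) as [I1|I1]; [|eauto].
      apply Hs in I0, I1. rewrite I0 in I1. apply app_inv_head in I1. discriminate. }
    destruct Hnew as (z & Hz & Sz). exists (z :: map ext l).
    split; [constructor; assumption|]. split; [intros t [<-|It]; auto|].
    simpl. rewrite length_map. split; lia.
  - exists (map ext l). rewrite length_map. split; [exact ND'|]. split; [exact Hin'|]. split; [lia | tauto].
Qed.

Lemma segments_lower_bound Q p : (exists Y, Q Y) ->
  principal_function (fun m => exists s, branching (pruned_tree Q) s /\ length s = m) p ->
  forall m, exists l, NoDup l /\ (forall t, In t l -> segment Q m t) /\ 1 <= length l /\
    forall k, p k < m -> k + 2 <= length l.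
Proof.
  intros [Y0 HY0] [Hinc HA]. induction m as [|m (l & ND & Hl & L1 & Hk)].
  - exists [[]]. split; [repeat constructor; auto|]. split; [intros t [<-|[]]; exists Y0; auto|].
    split; [simpl; lia | intros; lia].
  - destruct (segments_step Q m l ND Hl) as (l' & ND' & Hl' & Hle & Hbr).
    exists l'. split; [exact ND'|]. split; [exact Hl'|]. split; [lia|].
    intros k Hk'. destruct (Nat.eq_dec (p k) m) as [E|E].
    + assert (S (length l) <= length l') by (apply Hbr, HA; eauto).
      destruct k as [|k]; [lia|]. specialize (Hinc k). specialize (Hk k ltac:(lia)). lia.
    + specialize (Hk k ltac:(lia)). lia.
Qed.

(** * Very small classes are closed under unions with bounded images *)

Section VerySmallUnion.
Variables (P : (nat -> bool) -> Prop) (T0 : string -> Prop) (p0 : nat -> nat).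
Hypothesis HT0 : is_tree T0.
Hypothesis HP0 : forall X, P X <-> path T0 X.
Hypothesis Hp0 : principal_function (fun m => exists s, branching T0 s /\ length s = m) p0.

Lemma first_difference_branching_level X Y d :
  P X -> P Y -> agree X Y d -> X d <> Y d -> exists i, p0 i = d.
Proof.
  intros HX HY Hag Hne. apply (proj2 Hp0). exists (init X d). split; [|apply init_length].
  apply init_eq_agree in Hag.
  assert (BX := extendible_init_path T0 X (S d) (proj1 (HP0 X) HX)).
  assert (BY := extendible_init_path T0 Y (S d) (proj1 (HP0 Y) HY)).
  rewrite init_S in BX, BY. rewrite <- Hag in BY.
  destruct (X d), (Y d); try congruence; split; assumption.
Qed.

Lemma agree_of_agree_branching_levels X X' j L : P X -> P X' -> L <= p0 j ->
  agree (fun i => X (p0 i)) (fun i => X' (p0 i)) j -> agree X X' L.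
Proof.
  intros HX HX' HL Hj. apply NNPP. intro N. destruct (first_difference X X' _ N) as (d & Hd & Hb & Hne).
  destruct (first_difference_branching_level X X' d HX HX' Hb Hne) as [i <-].
  apply Hne, Hj. apply (strict_mono_lt_inv p0 (proj1 Hp0)). lia.
Qed.

Variables (R : (nat -> bool) -> (nat -> bool) -> Prop) (u : nat -> nat).
Hypothesis HR : forall X X' Y Y' m, R X Y -> R X' Y' -> agree X X' (u m) -> agree Y Y' m.

Definition union_image (Y : nat -> bool) : Prop := P Y \/ exists X, P X /\ R X Y.

(* A segment is coded by one bit telling which part of the union it comes from, together with
   the bits of a witness in [P] at the first [j] branching levels. *)
Lemma segments_upper_bound m j l : m + u m <= p0 j -> NoDup l ->
  (forall t, In t l -> segment union_image m t) -> length l <= 2 ^ S j.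
Proof.
  intros Hj ND Hl.
  assert (Hch : forall t, exists bX : bool * (nat -> bool), In t l -> P (snd bX) /\
     ((fst bX = true /\ init (snd bX) m = t) \/
      (fst bX = false /\ exists Y, R (snd bX) Y /\ init Y m = t))).
  { intro t. destruct (classic (In t l)) as [I|I].
    - destruct (Hl t I) as (Y & [HY|(X & HX & HXY)] & HYt).
      + exists (true, Y). simpl. auto.
      + exists (false, X). simpl. intros _. split; [exact HX|]. right. split; eauto.
    - exists (true, fun _ => true). tauto. }
  set (code := fun t => let bX := proj1_sig (constructive_indefinite_description _ (Hch t)) in
                        fst bX :: init (fun i => snd bX (p0 i)) j).
  rewrite <- (length_map code l). apply NoDup_strings_length_le.
  - apply NoDup_map_NoDup_ForallPairs; [|exact ND]. intros x y Ix Iy E. unfold code in E.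
    destruct (constructive_indefinite_description _ (Hch x)) as [[b X] HX].
    destruct (constructive_indefinite_description _ (Hch y)) as [[b' X'] HX']. simpl in *.
    injection E as <- Ej. apply init_eq_agree in Ej.
    destruct (HX Ix) as [PX Ex]. destruct (HX' Iy) as [PX' Ey].
    assert (Ag := agree_of_agree_branching_levels X X' j (m + u m) PX PX' Hj Ej).
    destruct Ex as [[-> <-]|[-> (Y & RY & <-)]]; destruct Ey as [[Hb <-]|[Hb (Y' & RY' & <-)]];
      try discriminate; apply init_eq_agree.
    + intros i Hi. apply Ag. lia.
    + apply (HR X X' Y Y' m RY RY'). intros i Hi. apply Ag. lia.
  - intros x Hx. apply in_map_iff in Hx. destruct Hx as (t & <- & _).
    unfold code. simpl. rewrite init_length. reflexivity.
Qed.

Lemma branching_levels_unbounded M :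
  exists m, M <= m /\ exists s, branching (pruned_tree union_image) s /\ length s = m.
Proof.
  exists (p0 M). split; [apply strict_mono_ge_id, (proj1 Hp0)|].
  destruct (proj2 (proj2 Hp0 (p0 M)) (ex_intro _ M eq_refl)) as (s & [B0 B1] & Ls).
  destruct (extendible_path T0 _ HT0 B0) as (X0 & PX0 & E0).
  destruct (extendible_path T0 _ HT0 B1) as (X1 & PX1 & E1).
  rewrite length_app, Nat.add_1_r, init_S in E0, E1.
  apply app_inj_tail in E0 as [E0 F0]. apply app_inj_tail in E1 as [E1 F1].
  exists (init X0 (length s)). split; [|rewrite init_length; exact Ls].
  apply (branching_pruned_tree_split union_image X0 X1); try (left; apply HP0; assumption);
    [apply init_eq_agree; congruence | exact F0 | exact F1].
Qed.

Hypothesis Hp0dom : forall g, computable g -> dominates p0 g.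
Hypothesis Hu : computable u.

(* [p0] eventually dominates [G], and [G (log2 (n + 2) - 2)] bounds [m + u m] for [m = g n]. *)
Lemma branching_levels_dominate p :
  principal_function (fun m => exists s, branching (pruned_tree union_image) s /\ length s = m) p ->
  forall g, computable g -> dominates p g.
Proof.
  intros Hp g Hg.
  set (G := fun j => bmax (fun _ n => g n + u (g n)) 0 (2 ^ (j + 3))).
  assert (CG : computable G).
  { assert (Computable1 (fun _ => 0) g) by exact Hg. assert (Computable1 (fun _ => 0) u) by exact Hu.
    assert (Computable2 (fun _ => 0) (fun _ n => g n + u (g n))) by (unfold Computable2; prove_computable).
    unfold computable, G. prove_computable. }
  destruct (Hp0dom G CG) as [J HJ].
  exists (2 ^ (J + 2)). intros n Hn.
  destruct (Nat.le_gt_cases (g n) (p n)) as [|Hlt]; [assumption | exfalso]. set (m := g n) in Hlt.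
  assert (Hne : exists Y, union_image Y).
  { destruct (proj2 (proj2 Hp0 (p0 0)) (ex_intro _ 0 eq_refl)) as (s & [B0 _] & _).
    destruct (extendible_path T0 _ HT0 B0) as (X & HX & _). exists X. left. apply HP0, HX. }
  destruct (segments_lower_bound union_image p Hne Hp m) as (l & ND & Hl & _ & Hk).
  specialize (Hk n Hlt).
  set (e := Nat.log2 (n + 2)).
  destruct (Nat.log2_spec (n + 2) ltac:(lia)) as [Le1 Le2]. fold e in Le1, Le2.
  assert (He : J + 2 <= e).
  { destruct (Nat.le_gt_cases (J + 2) e); [assumption|].
    assert (2 ^ S e <= 2 ^ (J + 2)) by (apply Nat.pow_le_mono_r; lia). lia. }
  assert (Hj : m + u m <= p0 (e - 2)).
  { apply Nat.le_trans with (G (e - 2)); [|apply HJ; lia].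
    apply (le_bmax (fun _ n => g n + u (g n)) 0 (2 ^ (e - 2 + 3)) n).
    replace (e - 2 + 3) with (S e) by lia. lia. }
  pose proof (segments_upper_bound m (e - 2) l Hj ND Hl) as Hup.
  replace (S (e - 2)) with (e - 1) in Hup by lia.
  replace e with (S (e - 1)) in Le1 by lia. rewrite Nat.pow_succ_r' in Le1.
  pose proof (Nat.pow_nonzero 2 (e - 1) ltac:(lia)). lia.
Qed.

End VerySmallUnion.

Lemma very_small_union_image P R u : very_small P -> computable u ->
  (forall X X' Y Y' m, R X Y -> R X' Y' -> agree X X' (u m) -> agree Y Y' m) ->
  (exists T, forall Y, union_image P R Y <-> path T Y) -> very_small (union_image P R).
Proof.
  intros (T0 & p0 & HT0 & HP0 & Hp0 & Hp0dom) Hu HR [T HT].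
  destruct (principal_function_exists _ (branching_levels_unbounded P T0 p0 HT0 HP0 Hp0 R)) as [p Hp].
  exists (pruned_tree (union_image P R)), p.
  split; [apply pruned_tree_is_tree|]. split; [exact (paths_pruned_tree _ T HT)|].
  split; [exact Hp|].
  exact (branching_levels_dominate P T0 p0 HT0 HP0 Hp0 R u HR Hp0dom Hu p Hp).
Qed.

(** * Reductions with a computable use bound *)

Definition bounded_reduction (qq : nat -> nat) (c : code) (X Y : nat -> bool) : Prop :=
  forall n, run (qq n) (total_oracle (chi X)) c n = Some (b2n (Y n)).

Section BoundedReduction.
Variables (qq : nat -> nat) (c : code).
Hypothesis Hqq : forall n, qq n < qq (S n).

Lemma bounded_reduction_use X X' Y Y' m : bounded_reduction qq c X Y -> bounded_reduction qq c X' Y' ->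
  agree X X' (qq m) -> agree Y Y' m.
Proof.
  intros RX RX' Ag k Hk. apply b2n_inj. specialize (RX k). specialize (RX' k).
  rewrite (run_use _ _ _ (total_oracle (chi X'))) in RX; [congruence|].
  intros i Hi. unfold total_oracle, chi. rewrite Ag; [reflexivity|].
  pose proof (strict_mono_le qq Hqq k m ltac:(lia)). lia.
Qed.

Lemma run_string_oracle_init X k n x : k <= n ->
  run k (string_oracle (init X n)) c x = run k (total_oracle (chi X)) c x.
Proof.
  intro H. apply run_use. intros i Hi. unfold string_oracle, total_oracle. rewrite init_length.
  destruct (Nat.ltb_spec i n); [|lia]. rewrite nth_init by lia. reflexivity.
Qed.

Lemma run_string_oracle_prefix s s' k x : prefix s s' -> k <= length s ->
  run k (string_oracle s) c x = run k (string_oracle s') c x.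
Proof.
  intros Hp H. apply run_use. intros i Hi. unfold string_oracle. pose proof (prefix_length _ _ Hp).
  destruct (Nat.ltb_spec i (length s)), (Nat.ltb_spec i (length s')); try lia.
  rewrite (prefix_nth s s'); auto; lia.
Qed.

Definition image_tree (TP : string -> Prop) (t : string) : Prop :=
  exists s, length s = qq (length t) /\ TP s /\
    forall n, n < length t -> run (qq n) (string_oracle s) c n = Some (b2n (nth n t false)).

Variables (P : (nat -> bool) -> Prop) (TP : string -> Prop).
Hypothesis HTP : is_tree TP.
Hypothesis HP : forall X, P X <-> path TP X.

Lemma image_tree_is_tree : is_tree (image_tree TP).
Proof.
  intros t t' [u ->] (s & Ls & Ts & Hs). rewrite length_app in Ls.
  exists (firstn (qq (length t)) s).
  pose proof (strict_mono_le qq Hqq (length t) (length t + length u) ltac:(lia)).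
  split; [rewrite length_firstn; lia|]. split; [exact (HTP _ s (prefix_firstn _ _) Ts)|].
  intros n Hn. pose proof (strict_mono_le qq Hqq n (length t) ltac:(lia)).
  rewrite (run_string_oracle_prefix _ s); [|apply prefix_firstn | rewrite length_firstn; lia].
  rewrite Hs by (rewrite length_app; lia). rewrite app_nth1; auto.
Qed.

Lemma path_image_tree X Y : P X -> bounded_reduction qq c X Y -> path (image_tree TP) Y.
Proof.
  intros HX HR n. exists (init X (qq (length (init Y n)))).
  split; [apply init_length|]. split; [apply HP, HX|].
  intros m Hm. rewrite init_length in *. rewrite run_string_oracle_init.
  - rewrite HR, nth_init; auto.
  - apply strict_mono_le; [exact Hqq | lia].
Qed.

(* The strings of [TP] computing [Y] correctly so far form a tree; a path of it is a witness. *)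
Lemma image_of_path_image_tree Y : path (image_tree TP) Y -> exists X, P X /\ bounded_reduction qq c X Y.
Proof.
  intros HY.
  set (V := fun s => TP s /\ forall n, qq n < length s ->
                       run (qq n) (string_oracle s) c n = Some (b2n (Y n))).
  assert (HV : is_tree V).
  { intros s t Hst [Tt Ht]. split; [exact (HTP _ t Hst Tt)|].
    intros n Hn. rewrite (run_string_oracle_prefix s t); [|exact Hst | lia].
    apply Ht. pose proof (prefix_length _ _ Hst). lia. }
  assert (Hlev : forall n, exists s, V s /\ length s = qq n).
  { intro n. destruct (HY n) as (s & Ls & Ts & Hs). rewrite init_length in Ls.
    exists s. split; [split; [exact Ts|] | exact Ls].
    intros m Hm. rewrite Ls in Hm. apply (strict_mono_lt_inv qq Hqq) in Hm.
    rewrite Hs by (rewrite init_length; exact Hm). rewrite nth_init; auto. }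
  assert (Hext : extendible V []).
  { destruct (Hlev 0) as (s0 & V0 & _).
    apply (extendible_of_lengths V [] (fun n => proj1_sig (constructive_indefinite_description _ (Hlev n)))).
    - exact (HV [] s0 (ex_intro _ s0 eq_refl) V0).
    - intro n. destruct (constructive_indefinite_description _ (Hlev n)) as (s & Vs & Ls). simpl.
      split; [exact Vs|]. split; [exists s; reflexivity|]. rewrite Ls. apply strict_mono_ge_id, Hqq. }
  destruct (extendible_path V [] HV Hext) as (X & HX & _).
  exists X. split; [apply HP; intro n; apply (HX n)|].
  intro n. destruct (HX (S (qq n))) as [_ H]. rewrite <- (run_string_oracle_init X (qq n) (S (qq n))) by lia.
  apply H. rewrite init_length. lia.
Qed.

Lemma union_image_paths Y :
  union_image P (bounded_reduction qq c) Y <-> path (fun t => image_tree TP t \/ TP t) Y.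
Proof.
  split.
  - intros [HY|(X & HX & HXY)] n; [right; apply HP, HY | left; exact (path_image_tree X Y HX HXY n)].
  - intro HY. destruct (classic (path TP Y)) as [A|A]; [left; apply HP, A|].
    right. apply image_of_path_image_tree.
    apply not_all_ex_not in A. destruct A as [n0 Hn0]. intro n.
    destruct (HY (Nat.max n n0)) as [W|W].
    + exact (image_tree_is_tree _ _ (prefix_init Y n _ (Nat.le_max_l _ _)) W).
    + exfalso. exact (Hn0 (HTP _ _ (prefix_init Y n0 _ (Nat.le_max_r _ _)) W)).
Qed.

End BoundedReduction.

#[export] Instance Computable2_scode_oracle o : Computable2 o (oracle_coded scode_oracle).
Proof.
  apply (computable_in_ext o (fun z => ifz (lt_indicator (csnd z) (scode_length (cfst z))) 0
                                         (S (scode_bit (cfst z) (csnd z))))).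
  - intro z. unfold oracle_coded, scode_oracle. rewrite lt_indicator_spec. destruct (_ <? _); reflexivity.
  - prove_computable.
Qed.

Lemma run_coded_scode c k s n :
  run_coded scode_oracle c (cpair k (scode s)) n = opt_code (run k (string_oracle s) c n).
Proof.
  unfold run_coded. rewrite cfst_cpair, csnd_cpair. f_equal.
  apply run_use. intros. apply scode_oracle_scode.
Qed.

Section UnionTreeChar.
Variables (FP qq : nat -> nat) (c : code).

(* Arguments are codes: [w] pairs the codes of [t] and [s]. *)
Definition reproduces (w n : nat) : nat :=
  eq_indicator (run_coded scode_oracle c (cpair (qq n) (csnd w)) n) (S (scode_bit (cfst w) n)).
Definition image_witness (t s : nat) : nat :=
  eq_indicator (scode_length s) (qq (scode_length t)) * eq_indicator (FP s) 1 *
  bprod reproduces (cpair t s) (scode_length t).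
Definition union_tree_char (t : nat) : nat :=
  ifz (bsum image_witness t (2 ^ S (qq (scode_length t))) + eq_indicator (FP t) 1) 0 1.

Variable TP : string -> Prop.
Hypothesis HTP : forall s, TP s <-> FP (scode s) = 1.

Lemma image_witness_spec t s : image_witness (scode t) (scode s) <> 0 <->
  length s = qq (length t) /\ TP s /\
  forall n, n < length t -> run (qq n) (string_oracle s) c n = Some (b2n (nth n t false)).
Proof.
  unfold image_witness. rewrite <- !Nat.neq_mul_0, bprod_neq0, !scode_length_scode, HTP, !eq_indicator_neq0.
  assert (HI : forall n, reproduces (cpair (scode t) (scode s)) n <> 0 <->
                         run (qq n) (string_oracle s) c n = Some (b2n (nth n t false))).
  { intro n. unfold reproduces.
    rewrite eq_indicator_neq0, cfst_cpair, csnd_cpair, run_coded_scode, scode_bit_scode.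
    destruct (run _ _ _ _); simpl; split; congruence. }
  split.
  - intros [[H1 H2] H3]. split; [exact H1|]. split; [exact H2|]. intros n Hn. apply HI, H3, Hn.
  - intros (H1 & H2 & H3). split; [split; assumption|]. intros n Hn. apply HI, H3, Hn.
Qed.

Lemma union_tree_char_spec t : (image_tree qq c TP t \/ TP t) <-> union_tree_char (scode t) = 1.
Proof.
  unfold union_tree_char.
  assert (E : forall v, ifz v 0 1 = 1 <-> v <> 0) by (intros [|v]; simpl; split; congruence).
  rewrite E, Nat.eq_add_0, HTP, <- (eq_indicator_neq0 (FP (scode t)) 1).
  assert (HW : image_tree qq c TP t <->
               bsum image_witness (scode t) (2 ^ S (qq (scode_length (scode t)))) <> 0).
  { rewrite bsum_neq0, scode_length_scode. split.
    - intros (s & Ls & Ts & Hs). exists (scode s). split.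
      + rewrite <- Ls. apply scode_lt_pow2.
      + apply image_witness_spec. auto.
    - intros (m & Hm & Hw). destruct (scode_surj m) as [s <-]. apply image_witness_spec in Hw.
      exists s. exact Hw. }
  rewrite HW. tauto.
Qed.

Lemma union_tree_char_computable f : computable_in f FP -> computable_in f qq ->
  computable_in f union_tree_char.
Proof.
  intros HFP Hqq.
  assert (Computable1 f FP) by exact HFP. assert (Computable1 f qq) by exact Hqq.
  assert (Computable2 f (run_coded scode_oracle c)) by (apply computable_run_coded; exact _).
  assert (Computable2 f reproduces) by (unfold Computable2, reproduces; prove_computable).
  assert (Computable2 f image_witness) by (unfold Computable2, image_witness; prove_computable).
  unfold union_tree_char. prove_computable.
Qed.

End UnionTreeChar.

Lemma Pi01_union_image f P qq c : Pi01_class f P -> computable qq -> (forall n, qq n < qq (S n)) ->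
  Pi01_class f (union_image P (bounded_reduction qq c)).
Proof.
  intros (TP & HTP & (FP & HFP & HFPs) & HP) Hqq Hinc.
  exists (fun t => image_tree qq c TP t \/ TP t). split; [|split].
  - intros s t Hst [W|W]; [left; exact (image_tree_is_tree qq c Hinc TP HTP s t Hst W)|].
    right. exact (HTP s t Hst W).
  - exists (union_tree_char FP qq c). split.
    + apply union_tree_char_computable; [exact HFP | apply computable_in_of_computable, Hqq].
    + intro s. apply union_tree_char_spec, HFPs.
  - intro Y. apply union_image_paths; assumption.
Qed.

Lemma hyperimmune_free_Turing_le h h' : hyperimmune_free h -> Turing_le h' h -> hyperimmune_free h'.
Proof. intros HIF Hle g Hg. apply HIF. exact (computable_in_trans _ _ g Hle Hg). Qed.

(* The least converging step bound is found by an unbounded search relative to [h]. *)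
Lemma least_fuel_Turing_le h h' c : (forall x, eval (chi h) c x (chi h' x)) ->
  exists gh, fun_le_T gh h /\ forall n, run (gh n) (total_oracle (chi h)) c n = Some (chi h' n).
Proof.
  intro Hc.
  assert (Hleast : forall n, exists k, run k (total_oracle (chi h)) c n = Some (chi h' n) /\
                     forall k', run k' (total_oracle (chi h)) c n = Some (chi h' n) -> k <= k')
    by (intro n; apply least_witness, run_complete, Hc).
  set (gh := fun n => proj1_sig (constructive_indefinite_description _ (Hleast n))).
  assert (Hgh : forall n, run (gh n) (total_oracle (chi h)) c n = Some (chi h' n) /\
                  forall k', run k' (total_oracle (chi h)) c n = Some (chi h' n) -> gh n <= k')
    by (intro n; exact (proj2_sig (constructive_indefinite_description _ (Hleast n)))).
  exists gh. split; [|intro n; apply Hgh].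
  set (ORC := fun (_ i : nat) => Some (chi h i)).
  assert (Hrun : forall n k, run_coded ORC c (cpair k 0) n = opt_code (run k (total_oracle (chi h)) c n))
    by (intros n k; unfold run_coded; rewrite cfst_cpair, csnd_cpair; reflexivity).
  apply (computable_in_mu (chi h) (fun n k => 1 - eq_indicator (run_coded ORC c (cpair k 0) n) (S (chi h' n)))).
  - assert (Computable1 (chi h) (chi h')) by (exists c; exact Hc).
    assert (Computable2 (chi h) (oracle_coded ORC)).
    { apply (computable_in_ext _ (fun z => S (chi h (csnd z)))); [reflexivity | prove_computable]. }
    assert (Computable2 (chi h) (run_coded ORC c)) by (apply computable_run_coded; exact _).
    prove_computable.
  - intro n. destruct (Hgh n) as [G1 G2]. rewrite Hrun, eq_indicator_spec, G1, Nat.eqb_refl. split; [reflexivity|].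
    intros m Hm. rewrite Hrun, eq_indicator_spec.
    destruct (Nat.eqb_spec (opt_code (run m (total_oracle (chi h)) c n)) (S (chi h' n)))
      as [E|E]; [|simpl; lia].
    destruct (run m _ c n) eqn:E2; simpl in E; [|discriminate].
    injection E as ->. specialize (G2 m E2). lia.
Qed.

Lemma strictly_increasing_majorant g q : computable q -> dominates q g ->
  exists qq, computable qq /\ (forall n, qq n < qq (S n)) /\ forall n, g n <= qq n.
Proof.
  intros Cq [N HN].
  set (K := bsum (fun _ i => g i) 0 N).
  set (qq := fun n => bsum (fun _ i => S (q i + K)) 0 (S n)).
  exists qq. split; [|split].
  - assert (Computable1 (fun _ => 0) q) by exact Cq.
    assert (Computable2 (fun _ => 0) (fun _ i => S (q i + K))) by (unfold Computable2; prove_computable).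
    unfold computable, qq. prove_computable.
  - intro n. unfold qq. rewrite (bsum_S _ _ (S n)). lia.
  - intro n. assert (g n <= q n + K).
    { destruct (Nat.lt_ge_cases n N) as [L|L].
      - pose proof (le_bsum (fun _ i => g i) 0 N n L). unfold K. simpl in *. lia.
      - specialize (HN n L). lia. }
    pose proof (le_bsum (fun _ i => S (q i + K)) 0 (S n) n ltac:(lia)). unfold qq. simpl in *. lia.
Qed.

Lemma computable_use_bound h h' c : hyperimmune_free h -> (forall x, eval (chi h) c x (chi h' x)) ->
  exists qq, computable qq /\ (forall n, qq n < qq (S n)) /\ bounded_reduction qq c h h'.
Proof.
  intros HIF Hc.
  destruct (least_fuel_Turing_le h h' c Hc) as (gh & Hgh & Hrun).
  destruct (HIF gh Hgh) as (q & Cq & Hdom).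
  destruct (strictly_increasing_majorant gh q Cq Hdom) as (qq & Cqq & Hinc & Hle).
  exists qq. split; [exact Cqq|]. split; [exact Hinc|].
  intro n. exact (run_total_mono _ c _ _ n _ (Hrun n) (Hle n)).
Qed.

Theorem mainTheorem5 (f : nat -> nat) (h : nat -> bool) (P : (nat -> bool) -> Prop) :
  hyperimmune_free h -> Pi01_class f P -> very_small P -> P h ->
  forall h' : nat -> bool, Turing_le h' h ->
    hyperimmune_free h' /\
    exists Q : (nat -> bool) -> Prop, Pi01_class f Q /\ very_small Q /\ Q h'.
Proof.
  intros HIF HPi Hvs Ph h' Hle.
  split; [exact (hyperimmune_free_Turing_le h h' HIF Hle)|].
  destruct Hle as [c Hc].
  destruct (computable_use_bound h h' c HIF Hc) as (qq & Cqq & Hinc & Hred).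
  assert (HQ := Pi01_union_image f P qq c HPi Cqq Hinc).
  exists (union_image P (bounded_reduction qq c)). split; [exact HQ|]. split.
  - apply (very_small_union_image P _ qq Hvs Cqq (bounded_reduction_use qq c Hinc)).
    destruct HQ as (T & _ & _ & HT). exists T. exact HT.
  - right. exists h. split; assumption.
Qed.
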